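(* Consider the following chemical reaction network (the ERK cascade without feedback in which MEK and ERK share the same phosphatase PH) with 21 species RAF, pRAF, MEK, pMEK, ppMEK, ERK, pERK, ppERK, RAS, RAFPH, PH, RAS-RAF, MEK-pRAF, pMEK-pRAF, ERK-ppMEK, pERK-ppMEK, RAF-RAFPH, ppMEK-PH, pMEK-PH, ppERK-PH, pERK-PH and 30 reactions with rate constants $k_1,\dots,k_{30}$: RAF + RAS $\underset{k_2}{\overset{k_1}{\rightleftarrows}}$ RAS-RAF $\overset{k_3}{\to}$ pRAF + RAS; pRAF + RAFPH $\underset{k_5}{\overset{k_4}{\rightleftarrows}}$ RAF-RAFPH $\overset{k_6}{\to}$ RAF + RAFPH; MEK + pRAF $\underset{k_8}{\overset{k_7}{\rightleftarrows}}$ MEK-pRAF $\overset{k_9}{\to}$ pMEK + pRAF $\underset{k_{11}}{\overset{k_{10}}{\rightleftarrows}}$ pMEK-pRAF $\overset{k_{12}}{\to}$ ppMEK + pRAF; ppMEK + PH $\underset{k_{14}}{\overset{k_{13}}{\rightleftarrows}}$ ppMEK-PH $\overset{k_{15}}{\to}$ pMEK + PH $\underset{k_{17}}{\overset{k_{16}}{\rightleftarrows}}$ pMEK-PH $\overset{k_{18}}{\to}$ MEK + PH; ERK + ppMEK $\underset{k_{20}}{\overset{k_{19}}{\rightleftarrows}}$ ERK-ppMEK $\overset{k_{21}}{\to}$ pERK + ppMEK $\underset{k_{23}}{\overset{k_{22}}{\rightleftarrows}}$ pERK-ppMEK $\overset{k_{24}}{\to}$ ppERK + ppMEK; ppERK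 + PH $\underset{k_{26}}{\overset{k_{25}}{\rightleftarrows}}$ ppERK-PH $\overset{k_{27}}{\to}$ pERK + PH $\underset{k_{29}}{\overset{k_{28}}{\rightleftarrows}}$ pERK-PH $\overset{k_{30}}{\to}$ ERK + PH. Then for every choice of positive rate constants $k\in\mathbb{R}^{30}_{>0}$, the associated mass-action system has toric steady states; in particular its steady state ideal is a binomial ideal.
   Context: For a reaction network with species concentrations $x=(x_1,\dots,x_s)$ and reactions $y\to y'$ (complexes $y,y'\in\mathbb{Z}_{\ge0}^s$, where a complex is a formal sum of species) with positive rate constants, the mass-action system is $\dot x = f(x;k)=\sum_{\text{reactions } y\to y'} k_{y\to y'}\, x^{y}(y'-y)$, whose components $f_1,\dots,f_s$ are polynomials in $x$. The steady state ideal is $J=\langle f_1,\dots,f_s\rangle\subseteq\mathbb{R}[x_1,\dots,x_s]$. The system has toric steady states if $J$ can be generated by binomials (polynomials with at most two terms) and $J$ admits nonnegative zeros. *)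

From mathcomp Require Import all_boot all_algebra.
From mathcomp Require Import mpoly.
Set Implicit Arguments. Unset Strict Implicit. Unset Printing Implicit Defensive.
Import GRing.Theory.
Local Open Scope ring_scope.

(* A reaction y -> y' with rate constant index: reactant complex and product
   complex are given as multisets (lists) of species indices. *)
Definition reaction (n m : nat) := (seq 'I_n * seq 'I_n * 'I_m)%type.

Definition cmonom (R : ringType) (n : nat) (y : seq 'I_n) : {mpoly R[n]} :=
  \prod_(i <- y) 'X_i.

Definition massaction (R : ringType) (n m : nat) (rxns : seq (reaction n m))
  (k : 'I_m -> R) (s : 'I_n) : {mpoly R[n]} :=
  \sum_(r <- rxns)
     (k r.2 * ((count_mem s r.1.2)%:R - (count_mem s r.1.1)%:R)) *: cmonom R r.1.1.

Definition in_ideal (R : ringType) (n : nat) (gs : seq {mpoly R[n]}) (p : {mpoly R[n]}) : Prop :=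
  exists cs : seq {mpoly R[n]}, size cs = size gs /\
    p = \sum_(i < size gs) cs`_i * gs`_i.

Definition is_binomial (R : ringType) (n : nat) (p : {mpoly R[n]}) : bool :=
  (size (msupp p) <= 2)%N.

Definition ss_gens (R : ringType) (n m : nat) (rxns : seq (reaction n m)) (k : 'I_m -> R)
  : seq {mpoly R[n]} := [seq massaction rxns k s | s <- enum 'I_n].

Definition has_toric_steady_states (R : realDomainType) (n m : nat)
  (rxns : seq (reaction n m)) (k : 'I_m -> R) : Prop :=
  (exists gs : seq {mpoly R[n]}, all (@is_binomial R n) gs /\
     forall p, in_ideal gs p <-> in_ideal (ss_gens rxns k) p)
  /\ (exists x : 'I_n -> R, (forall i, 0 <= x i) /\
        forall s, (massaction rxns k s).@[x] = 0).

(* Species (0-based):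
   0 RAF, 1 pRAF, 2 MEK, 3 pMEK, 4 ppMEK, 5 ERK, 6 pERK, 7 ppERK, 8 RAS,
   9 RAFPH, 10 PH, 11 RAS-RAF, 12 MEK-pRAF, 13 pMEK-pRAF, 14 ERK-ppMEK,
   15 pERK-ppMEK, 16 RAF-RAFPH, 17 ppMEK-PH, 18 pMEK-PH, 19 ppERK-PH, 20 pERK-PH.
   Rate constant k_j is index j-1. *)
Definition erk_raw : seq (seq nat * seq nat * nat) :=
  [:: ([:: 0; 8], [:: 11], 0); ([:: 11], [:: 0; 8], 1); ([:: 11], [:: 1; 8], 2);
      ([:: 1; 9], [:: 16], 3); ([:: 16], [:: 1; 9], 4); ([:: 16], [:: 0; 9], 5);
      ([:: 2; 1], [:: 12], 6); ([:: 12], [:: 2; 1], 7); ([:: 12], [:: 3; 1], 8);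
      ([:: 3; 1], [:: 13], 9); ([:: 13], [:: 3; 1], 10); ([:: 13], [:: 4; 1], 11);
      ([:: 4; 10], [:: 17], 12); ([:: 17], [:: 4; 10], 13); ([:: 17], [:: 3; 10], 14);
      ([:: 3; 10], [:: 18], 15); ([:: 18], [:: 3; 10], 16); ([:: 18], [:: 2; 10], 17);
      ([:: 5; 4], [:: 14], 18); ([:: 14], [:: 5; 4], 19); ([:: 14], [:: 6; 4], 20);
      ([:: 6; 4], [:: 15], 21); ([:: 15], [:: 6; 4], 22); ([:: 15], [:: 7; 4], 23);
      ([:: 7; 10], [:: 19], 24); ([:: 19], [:: 7; 10], 25); ([:: 19], [:: 6; 10], 26);
      ([:: 6; 10], [:: 20], 27); ([:: 20], [:: 6; 10], 28); ([:: 20], [:: 5; 10], 29)].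

Definition erk_network : seq (reaction 21 30) :=
  [seq ([seq (inord i : 'I_21) | i <- r.1.1], [seq (inord i : 'I_21) | i <- r.1.2],
        (inord r.2 : 'I_30)) | r <- erk_raw].

(* Every f_s is a combination of the mass-action monomials k_r x^(y_r), and
   summing f_s over a suitable set of species cancels all but at most two of
   them (the intermediate complexes are produced and consumed within the set).
   Seventeen such sums are binomials, and every f_s is in turn an integer
   combination of them, so they generate the steady-state ideal. Both facts
   only involve the stoichiometry, not the rate constants, and are checked by evaluation on the list of reactions. The
   origin is a nonnegative steady state since no reactant complex is empty. *)

From mathcomp Require Import all_boot all_algebra.
From mathcomp Require Import mpoly.
Set Implicit Arguments. Unset Strict Implicit. Unset Printing Implicit Defensive.
Import GRing.Theory.
Local Open Scope ring_scope.

Section IdealMembership.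
Variables (R : nzRingType) (n : nat).
Implicit Types (gs hs : seq {mpoly R[n]}) (p q : {mpoly R[n]}).

Lemma in_idealE gs p :
  in_ideal gs p <-> exists c : nat -> {mpoly R[n]}, p = \sum_(i < size gs) c i * gs`_i.
Proof.
split; first by move=> [cs [_ ->]]; exists (nth 0 cs).
move=> [c ->]; exists (mkseq c (size gs)); rewrite size_mkseq; split => //.
by apply: eq_bigr => i _; rewrite nth_mkseq.
Qed.

Lemma in_ideal0 gs : in_ideal gs 0.
Proof. by apply/in_idealE; exists (fun _ => 0); rewrite big1 // => i _; rewrite mul0r. Qed.

Lemma in_idealD gs p q : in_ideal gs p -> in_ideal gs q -> in_ideal gs (p + q).
Proof.
move=> /in_idealE [c1 ->] /in_idealE [c2 ->]; apply/in_idealE.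
exists (fun i => c1 i + c2 i).
by rewrite -big_split; apply: eq_bigr => i _; rewrite mulrDl.
Qed.

Lemma in_idealMl gs a p : in_ideal gs p -> in_ideal gs (a * p).
Proof.
move=> /in_idealE [c ->]; apply/in_idealE; exists (fun i => a * c i).
by rewrite mulr_sumr; apply: eq_bigr => i _; rewrite mulrA.
Qed.

Lemma in_ideal_nth gs i : in_ideal gs gs`_i.
Proof.
have [lt_i_gs | ?] := ltnP i (size gs); last by rewrite nth_default //; exact: in_ideal0.
apply/in_idealE; exists (fun j => (j == i)%:R).
rewrite (bigD1 (Ordinal lt_i_gs)) //= eqxx mul1r big1 ?addr0 // => j ne_j_i.
by rewrite (_ : _ == i = false) ?mul0r //; apply: contraNF ne_j_i => /eqP j_i; apply/eqP/val_inj.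
Qed.

Lemma in_ideal_sum (I : Type) gs (r : seq I) (F : I -> {mpoly R[n]}) :
  (forall i, in_ideal gs (F i)) -> in_ideal gs (\sum_(i <- r) F i).
Proof. by move=> gsF; apply: big_ind => //; [exact: in_ideal0 | exact: in_idealD]. Qed.

Lemma in_ideal_trans gs hs p :
  (forall i, in_ideal hs gs`_i) -> in_ideal gs p -> in_ideal hs p.
Proof. by move=> hs_gs /in_idealE [c ->]; apply: in_ideal_sum => i; exact: in_idealMl. Qed.

End IdealMembership.

Lemma nth_ss_gens (R : nzRingType) n m (rxns : seq (reaction n m)) (k : 'I_m -> R) (s : 'I_n) :
  (ss_gens rxns k)`_s = massaction rxns k s.
Proof. by rewrite /ss_gens (nth_map s) ?size_enum_ord // nth_ord_enum. Qed.

Lemma size_ss_gens (R : nzRingType) n m (rxns : seq (reaction n m)) (k : 'I_m -> R) :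
  size (ss_gens rxns k) = n.
Proof. by rewrite size_map size_enum_ord. Qed.

Section MonomialSums.
Variables (R : comNzRingType) (n : nat) (T : eqType) (rs : seq T) (c : T -> R).

Definition complex_monomial (y : seq 'I_n) : 'X_{1.. n} := (\sum_(i <- y) U_(i))%MM.

Lemma cmonomE y : cmonom R y = 'X_[complex_monomial y].
Proof.
rewrite /cmonom /complex_monomial; elim: y => [|i y IHy]; first by rewrite !big_nil mpolyX0.
by rewrite !big_cons IHy mpolyXD.
Qed.

Lemma msupp_sum_cmonom (y : T -> seq 'I_n) :
  {subset msupp (\sum_(t <- rs) c t *: cmonom R (y t))
     <= [seq complex_monomial (y t) | t <- rs & c t != 0]}.
Proof.
elim: rs => [|t r IHr] mon; first by rewrite big_nil -mpolyC0 msupp0.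
rewrite big_cons => /msuppD_le; rewrite mem_cat /= => /orP [|/IHr].
  have [->|_] := eqVneq (c t) 0; first by rewrite scale0r -mpolyC0 msupp0 in_nil.
  by move=> /msuppZ_le; rewrite cmonomE msuppX /= !inE => ->.
by case: (c t != 0) => // mon_r; rewrite inE mon_r orbT.
Qed.

Lemma is_binomial_sum_cmonom (K : eqType) (key : T -> K) (y : K -> seq 'I_n) :
  (size (undup [seq key t | t <- rs & (c t != 0)%R]) <= 2)%N ->
  is_binomial (\sum_(t <- rs) c t *: cmonom R (y (key t))).
Proof.
apply: leq_trans; rewrite -(size_map (complex_monomial \o y)).
apply: uniq_leq_size (msupp_uniq _) _ => mon /msupp_sum_cmonom /mapP [t t_rs ->].
by apply: (map_f (complex_monomial \o y)); rewrite mem_undup; apply: map_f.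
Qed.

Lemma sum_cmonom_eval0 (y : T -> seq 'I_n) :
  {in rs, forall t, y t != [::]} ->
  (\sum_(t <- rs) c t *: cmonom R (y t)).@[fun _ => 0] = 0.
Proof.
move=> y_nonempty; rewrite (big_morph _ (@mevalD _ _ _) (meval0 _)).
apply: big1_seq => t /andP [_ t_rs].
rewrite mevalZ /cmonom; case: (y t) (y_nonempty t t_rs) => [|i yt] //= _.
by rewrite big_cons mevalM mevalXU mul0r mulr0.
Qed.

End MonomialSums.

Definition raw_reaction := (seq nat * seq nat * nat)%type.

Definition of_raw n m (rr : raw_reaction) : reaction n.+1 m.+1 :=
  ([seq inord i | i <- rr.1.1], [seq inord i | i <- rr.1.2], inord rr.2).

Definition raw_stoich (s : nat) (rr : raw_reaction) : int :=
  (count_mem s rr.1.2)%:Z - (count_mem s rr.1.1)%:Z.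

(* A fold rather than a big sum, so that the certificate below evaluates under
   [vm_compute] ([\sum] is locked). *)
Definition zcomb (I : Type) (c : seq (I * int)) (f : I -> int) : int :=
  foldr (fun p z => p.2 * f p.1 + z) 0 c.

Lemma zcombE (I : Type) (c : seq (I * int)) (f : I -> int) :
  zcomb c f = \sum_(p <- c) p.2 * f p.1.
Proof. by elim: c => [|p c IHc]; rewrite ?big_nil ?big_cons //= IHc. Qed.

Section Fluxes.
Context {R : comNzRingType} {n m : nat} (raw : seq raw_reaction) (k : 'I_m.+1 -> R).

Definition flux_sum (w : raw_reaction -> int) : {mpoly R[n.+1]} :=
  \sum_(rr <- raw) (k (inord rr.2) * (w rr)%:~R) *: cmonom R [seq inord i | i <- rr.1.1].

Lemma count_mem_inord (s : nat) (l : seq nat) :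
  (s < n.+1)%N -> all (fun i => i < n.+1)%N l ->
  count_mem (inord s : 'I_n.+1) [seq inord i | i <- l] = count_mem s l.
Proof.
move=> lt_s; elim: l => //= i l IHl /andP [lt_i /IHl ->].
by rewrite -(inj_eq val_inj) /= !inordK.
Qed.

Lemma massaction_of_raw s :
  all (fun rr => all (fun i => i < n.+1)%N (rr.1.1 ++ rr.1.2)) raw -> (s < n.+1)%N ->
  massaction [seq @of_raw n m rr | rr <- raw] k (inord s) = flux_sum (raw_stoich s).
Proof.
move=> /allP raw_bounded lt_s; rewrite /massaction big_map; apply: eq_big_seq => rr /raw_bounded.
by rewrite all_cat => /andP [bnd1 bnd2] /=; rewrite !count_mem_inord // intrB.
Qed.

Lemma eq_flux_sum w1 w2 : {in raw, w1 =1 w2} -> flux_sum w1 = flux_sum w2.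
Proof. by move=> w12; apply: eq_big_seq => rr /w12 ->. Qed.

Lemma flux_sum_zcomb (I : Type) (c : seq (I * int)) (w : I -> raw_reaction -> int) :
  flux_sum (fun rr => zcomb c (w^~ rr)) = \sum_(p <- c) p.2%:~R * flux_sum (w p.1).
Proof.
under [RHS]eq_bigr => p _ do rewrite mulr_sumr.
rewrite exchange_big; apply: eq_bigr => rr _.
rewrite zcombE rmorph_sum mulr_sumr scaler_suml; apply: eq_bigr => p _.
by rewrite mulrzl scalerMzl -mulrzr rmorphM /= [_ * (w _ _)%:~R]mulrC mulrA.
Qed.

Lemma flux_sum_binomial (w : raw_reaction -> int) :
  (size (undup [seq rr.1.1 | rr <- raw & (w rr != 0)%R]) <= 2)%N -> is_binomial (flux_sum w).
Proof.
move=> size_w; apply: is_binomial_sum_cmonom (leq_trans _ size_w).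
apply: uniq_leq_size (undup_uniq _) _ => y; rewrite !mem_undup => /mapP [rr].
rewrite mem_filter => /andP [nz_c rr_raw] ->; apply: map_f; rewrite mem_filter rr_raw andbT.
by apply: contraNneq nz_c => ->; rewrite mulr0.
Qed.

Lemma flux_sum_eval0 w :
  all (fun rr => rr.1.1 != [::]) raw -> (flux_sum w).@[fun _ => 0] = 0.
Proof. by move=> /allP nonempty; apply: sum_cmonom_eval0 => rr /nonempty; case: rr.1.1. Qed.

End Fluxes.

Section Certificate.
Variables (R : realDomainType) (n m : nat) (raw : seq raw_reaction) (k : 'I_m.+1 -> R).
Variables gens coef : seq (seq (nat * int)).

Local Notation rxns := [seq @of_raw n m rr | rr <- raw].
Local Notation f := (massaction rxns k).

Hypothesis raw_nonempty : all (fun rr => rr.1.1 != [::]) raw.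
Hypothesis raw_bounded : all (fun rr => all (fun i => i < n.+1)%N (rr.1.1 ++ rr.1.2)) raw.
Hypothesis gens_bounded : all (all (fun p => p.1 < n.+1)%N) gens.
Hypothesis gens_binomial :
  all (fun W => size (undup [seq rr.1.1 | rr <- raw & (zcomb W (raw_stoich^~ rr) != 0)%R])
                <= 2)%N gens.
Hypothesis coef_spec :
  all (fun s => all (fun rr => raw_stoich s rr ==
         zcomb (nth [::] coef s) (fun j => zcomb (nth [::] gens j) (raw_stoich^~ rr))) raw)
      (iota 0 n.+1).

Definition species_comb (W : seq (nat * int)) : {mpoly R[n.+1]} :=
  \sum_(p <- W) p.2%:~R * f (inord p.1).

Definition binomial_gens := [seq species_comb W | W <- gens].

Lemma species_comb_flux j :
  species_comb (nth [::] gens j) =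
  flux_sum raw k (fun rr => zcomb (nth [::] gens j) (raw_stoich^~ rr)).
Proof.
have W_bounded : all (fun p => p.1 < n.+1)%N (nth [::] gens j).
  have [lt_j | ?] := ltnP j (size gens); last by rewrite nth_default.
  exact: (allP gens_bounded) (mem_nth _ lt_j).
rewrite flux_sum_zcomb; apply: eq_big_seq => p /(allP W_bounded) lt_p.
by rewrite massaction_of_raw.
Qed.

Lemma nth_binomial_gens j : binomial_gens`_j = species_comb (nth [::] gens j).
Proof.
have [lt_j | ?] := ltnP j (size gens); first exact: nth_map.
by rewrite !nth_default ?size_map // /species_comb big_nil.
Qed.

Lemma binomial_gensP : all (@is_binomial R n.+1) binomial_gens.
Proof.
apply/(all_nthP 0) => j; rewrite size_map => lt_j.
rewrite nth_binomial_gens species_comb_flux; apply: flux_sum_binomial.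
exact: (allP gens_binomial) (mem_nth _ lt_j).
Qed.

Lemma species_comb_in_ss_ideal W : in_ideal (ss_gens rxns k) (species_comb W).
Proof.
apply: in_ideal_sum => p; apply: in_idealMl; rewrite -nth_ss_gens; exact: in_ideal_nth.
Qed.

Lemma massaction_in_binomial_ideal (s : 'I_n.+1) : in_ideal binomial_gens (f s).
Proof.
have coef_s : {in raw, raw_stoich s =1 fun rr =>
    zcomb (nth [::] coef s) (fun j => zcomb (nth [::] gens j) (raw_stoich^~ rr))}.
  move=> rr rr_raw; apply/eqP; move: rr rr_raw; apply/allP/(allP coef_spec).
  by rewrite mem_iota ltn_ord.
rewrite -(inord_val s) massaction_of_raw // (eq_flux_sum _ coef_s).
rewrite flux_sum_zcomb; apply: in_ideal_sum => p; apply: in_idealMl.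
rewrite -species_comb_flux -nth_binomial_gens; exact: in_ideal_nth.
Qed.

Lemma binomial_gens_ss_ideal p : in_ideal binomial_gens p <-> in_ideal (ss_gens rxns k) p.
Proof.
split; apply: in_ideal_trans => i.
  by rewrite nth_binomial_gens; exact: species_comb_in_ss_ideal.
have [lt_i | ?] := ltnP i n.+1; last first.
  by rewrite nth_default ?size_ss_gens //; exact: in_ideal0.
rewrite -[i]/(val (Ordinal lt_i)) nth_ss_gens; exact: massaction_in_binomial_ideal.
Qed.

Lemma massaction_eval0 (s : 'I_n.+1) : (f s).@[fun _ => 0] = 0.
Proof. by rewrite -(inord_val s) massaction_of_raw // flux_sum_eval0. Qed.

Theorem has_toric_steady_states_of_certificate : has_toric_steady_states rxns k.
Proof.
split.
  by exists binomial_gens; split; [exact: binomial_gensP | exact: binomial_gens_ss_ideal].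
by exists (fun _ => 0); split => // s; exact: massaction_eval0.
Qed.

End Certificate.

(* The generator for [sp] is the sum of the f_s for s in sp, species numbered as
   in [erk_network]; e.g. f_RAF + f_RAS-RAF = k_6 x_RAF-RAFPH - k_3 x_RAS-RAF. *)
Definition erk_binomial_weights : seq (seq (nat * int)) :=
  [seq [seq (s, 1%:Z) | s <- sp] | sp <- [:: [:: 8]; [:: 9]; [:: 11]; [:: 12]; [:: 13]; [:: 14];
     [:: 15]; [:: 16]; [:: 17]; [:: 18]; [:: 19]; [:: 20]; [:: 0; 11]; [:: 2; 12];
     [:: 4; 17; 14; 15]; [:: 5; 14]; [:: 7; 19]]]%N.

(* Row s writes f_s as an integer combination of the generators above, each
   referred to by its position in [erk_binomial_weights]. *)
Definition erk_coefficients : seq (seq (nat * int)) :=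
  [:: [:: (12, 1); (2, -1)];
      [:: (12, -1); (7, -1); (3, -1); (4, -1)];
      [:: (13, 1); (3, -1)];
      [:: (13, -1); (14, -1); (4, -1); (9, -1)];
      [:: (14, 1); (8, -1); (5, -1); (6, -1)];
      [:: (15, 1); (5, -1)];
      [:: (15, -1); (16, -1); (6, -1); (11, -1)];
      [:: (16, 1); (10, -1)];
      [:: (0, 1)]; [:: (1, 1)];
      [:: (8, -1); (9, -1); (10, -1); (11, -1)];
      [:: (2, 1)]; [:: (3, 1)]; [:: (4, 1)]; [:: (5, 1)]; [:: (6, 1)]; [:: (7, 1)];
      [:: (8, 1)]; [:: (9, 1)]; [:: (10, 1)]; [:: (11, 1)]].

Theorem mainTheorem3 (R : realFieldType) (k : 'I_30 -> R) (hk : forall j, 0 < k j) :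
  has_toric_steady_states erk_network k.
Proof.
by apply: (@has_toric_steady_states_of_certificate R 20 29 erk_raw k
  erk_binomial_weights erk_coefficients); vm_compute.
Qed.
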